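(* Let $S$ be a finite set with a total order $<$, $R$ a commutative ring with $1$, $\mathfrak M$ the set of circuits of a loopless matroid without parallel elements on $S$, and $\overline{\mathfrak M}$ its set of Gröbner circuits. Let $E$ be the exterior algebra over $R$ on generators $t_s$, $s\in S$, and identify $t_J$ with its image in $E$. Then the elements $\sum_{\nu=1}^{\#J}(-1)^{\nu-1}t_{J\setminus\{j_\nu\}}$, $J\in\mathfrak M\cap\overline{\mathfrak M}$, form a Gröbner basis (with respect to the degree lexicographic order on the monomials $t_J$) of the defining ideal of the Orlik–Solomon algebra in $E$.
   Context: For $J=\{j_1<\dots<j_{\#J}\}\subseteq S$, $t_J=t_{j_1}\cdots t_{j_{\#J}}$; $E=R\langle t_s\rangle/(t_s^2,\ t_rt_s+t_st_r)$. The defining ideal of the Orlik–Solomon algebra in $E$ is the ideal generated by $\sum_{\nu=1}^{\#J}(-1)^{\nu-1}t_{J\setminus\{j_\nu\}}$ for $J\in\mathfrak M$. Degree lexicographic order on the monomials $t_J$: $t_J<t_K$ iff $\#J<\#K$ or ($\#J=\#K$ and $\min(J\triangle K)\in J$); Gröbner basis means the leading monomials of the given elements generate the ideal generated by the leading monomials of all elements of the ideal. Matroid: circuits have more than two elements, are inclusion-incomparable, satisfy circuit elimination; dependent = contains a circuit. Gröbner circuits $\overline{\mathfrak M}$: defined recursively along this order on subsets; a dependent $J$ is a Gröbner circuit iff no Gröbner circuit $K$ smaller than $J$ has $K\setminus\{k_1\}$ a convex subset of $J\setminus\{j_1\}$ (convex subset: a subset containing every element of the ambient set lying between two of its elements;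 $k_1,j_1$ least elements). *)

From HB Require Import structures.
From mathcomp Require Import all_boot all_order all_algebra.
Set Implicit Arguments. Unset Strict Implicit. Unset Printing Implicit Defensive.
Import Order.TTheory GRing.Theory.

Local Open Scope ring_scope.

Section Combinatorics.
Context {d : Order.disp_t} {S : finOrderType d}.

Definition convex_in (A B : {set S}) : bool :=
  (A \subset B) &&
  [forall x in A, forall y in A, forall z in B,
     ((x < z)%O && (z < y)%O) ==> (z \in A)].

Definition drop_min (J : {set S}) : {set S} :=
  [set x in J | [exists y in J, (y < x)%O]].

Definition deglex_lt (J K : {set S}) : bool :=
  (#|J| < #|K|)%N ||
  ((#|J| == #|K|) &&
   [exists x in J :\: K, [forall y in (J :\: K) :|: (K :\: J), (x <= y)%O]]).

(* M is the set of circuits of a loopless matroid without parallel elements: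
   circuits have more than two elements, are inclusion-incomparable, and
   satisfy circuit elimination. *)
Definition is_circuit_system (M : {set {set S}}) : Prop :=
  [/\ (forall C, C \in M -> (2 < #|C|)%N),
      (forall C1 C2, C1 \in M -> C2 \in M -> C1 \subset C2 -> C1 = C2) &
      (forall C1 C2 e, C1 \in M -> C2 \in M -> C1 != C2 -> e \in C1 :&: C2 ->
         exists2 C3, C3 \in M & C3 \subset (C1 :|: C2) :\ e)].

Definition dependent (M : {set {set S}}) (J : {set S}) : bool :=
  [exists C in M, C \subset J].

(* Mbar is the set of Groebner circuits of M: the (unique, by well-founded
   recursion along deglex_lt) set satisfying the recursive definition. *)
Definition groebner_circuits_spec (M Mbar : {set {set S}}) : Prop :=
  forall J : {set S},
    (J \in Mbar) =
    dependent M J &&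
    ~~ [exists K in Mbar, deglex_lt K J && convex_in (drop_min K) (drop_min J)].

End Combinatorics.

Section Exterior.
Context {d : Order.disp_t} (S : finOrderType d) (R : comPzRingType).

(* The exterior algebra E over R on generators t_s (s in S), as the free
   R-module with basis the monomials t_J = t_{j_1}...t_{j_k} (J ⊆ S, j_1<...<j_k). *)
Local Notation ext := {ffun {set S} -> R^o}.

Definition tmon (J : {set S}) : ext := [ffun K => (K == J)%:R].

Definition inv_count (J K : {set S}) : nat :=
  #|[set p : S * S | [&& p.1 \in J, p.2 \in K & (p.2 < p.1)%O]]|.

Definition mono_mul (J K : {set S}) : ext :=
  if [disjoint J & K] then (-1) ^+ inv_count J K *: tmon (J :|: K) else 0.

Definition emul (x y : ext) : ext :=
  \sum_(J : {set S}) \sum_(K : {set S}) (x J * y K) *: mono_mul J K.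

Definition gen_ideal (G : ext -> Prop) (x : ext) : Prop :=
  exists n (a g b : 'I_n -> ext),
    (forall i, G (g i)) /\ x = \sum_(i < n) emul (emul (a i) (g i)) (b i).

Definition os_gen (J : {set S}) : ext :=
  \sum_(j in J) (-1) ^+ #|[set i in J | (i < j)%O]| *: tmon (J :\ j).

Definition is_lead (x : ext) (J : {set S}) : Prop :=
  x J != 0 /\ forall K, x K != 0 -> K = J \/ deglex_lt K J.

Definition lead_monomials (P : ext -> Prop) : ext -> Prop :=
  fun m => exists f, P f /\ exists J, is_lead f J /\ m = tmon J.

Definition groebner_basis (G I : ext -> Prop) : Prop :=
  (forall g, G g -> I g) /\
  (forall x, gen_ideal (lead_monomials G) x <-> gen_ideal (lead_monomials I) x).

Definition os_ideal (M : {set {set S}}) : ext -> Prop :=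
  gen_ideal (fun g => exists2 J, J \in M & g = os_gen J).

End Exterior.

Notation ext S R := {ffun {set S} -> R^o}.

From HB Require Import structures.
From mathcomp Require Import all_boot all_order all_algebra.
From mathcomp Require Import zify.
Set Implicit Arguments. Unset Strict Implicit. Unset Printing Implicit Defensive.
Import Order.TTheory GRing.Theory.
Local Open Scope ring_scope.

(* Each generator os_gen K has leading monomial t_(K \ min K), so it suffices to show that
   the leading monomial t_J of any element f of the ideal is divisible by such a monomial
   with K a Groebner circuit.  Suppose J contains no broken circuit C \ min C, and let
   level y be the largest j in J such that y lies in the matroid closure of
   {x in J | j <= x}.  The substitution t_y |-> t_(level y) (or 0 when y has no level) is
   an algebra endomorphism of E killing every os_gen C: the minimal level on a circuit is
   attained twice, and the two corresponding terms cancel.  But level is the identity on J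
   and level x <= x, so the t_J-coefficient of the image of f is that of f, which is
   nonzero.  Hence J contains some C \ min C, and the recursive definition of Groebner
   circuits provides a Groebner circuit K with K \ min K inside C \ min C. *)

Lemma big_setU_disjoint (T : finType) (V : Type) (idx : V) (op : Monoid.com_law idx)
    (A B : {set T}) (F : T -> V) :
  [disjoint A & B] ->
  \big[op/idx]_(i in A :|: B) F i = op (\big[op/idx]_(i in A) F i) (\big[op/idx]_(i in B) F i).
Proof. by move=> dAB; rewrite -bigU //; apply: eq_bigl => i; rewrite inE. Qed.

Lemma card_set_sum (T : finType) (A : {set T}) (P : pred T) :
  #|[set i in A | P i]| = (\sum_(i in A) (P i : nat))%N.
Proof.
rewrite -sum1_card big_mkcond [RHS]big_mkcond /=; apply: eq_bigr => i _.
by rewrite !inE; case: (i \in A); case: (P i).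
Qed.

Lemma even_big_sum (T : finType) (A : {set T}) (f : T -> nat) :
  (forall x, x \in A -> ~~ odd (f x)) -> ~~ odd (\sum_(x in A) f x)%N.
Proof.
move=> H; apply: (big_ind (fun n => ~~ odd n)) => // m n /negbTE hm /negbTE hn.
by rewrite oddD hm hn.
Qed.

Lemma sign_add_double (R : pzRingType) (n w : nat) : (-1) ^+ (n + 2 * w) = (-1) ^+ n :> R.
Proof. by rewrite -signr_odd oddD mul2n odd_double addbF signr_odd. Qed.

Lemma sign_sum_odd (R : pzRingType) (e1 e2 : nat) :
  odd (e1 + e2) -> (-1) ^+ e1 + (-1) ^+ e2 = 0 :> R.
Proof.
rewrite -(signr_odd R e1) -(signr_odd R e2) oddD.
by case: (odd e1); case: (odd e2) => //= _; rewrite ?expr0 ?expr1 ?addrN ?addNr.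
Qed.

Section Combinatorics.
Context {d : Order.disp_t} (S : finOrderType d).

Definition lexlt (J K : {set S}) : bool :=
  [exists x in J :\: K, [forall y in (J :\: K) :|: (K :\: J), (x <= y)%O]].

Lemma deglex_ltE (J K : {set S}) :
  deglex_lt J K = (#|J| < #|K|)%N || ((#|J| == #|K|) && lexlt J K).
Proof. by []. Qed.

Lemma lexlt_exists (J K : {set S}) : lexlt J K ->
  exists x, [/\ x \in J, x \notin K & forall u, (u < x)%O -> (u \in J) = (u \in K)].
Proof.
case/exists_inP => x /setDP [xJ xK] /forall_inP xmin; exists x; split=> // u ux.
apply/idP/idP => [uJ|uK]; apply/negPn/negP => nu.
  by have := xmin u; rewrite !inE uJ nu /= => /(_ isT); rewrite leNgt ux.
by have := xmin u; rewrite !inE uK nu orbT => /(_ isT); rewrite leNgt ux.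
Qed.

Lemma lexlt_intro (J K : {set S}) x : x \in J -> x \notin K ->
  (forall u, (u < x)%O -> (u \in J) = (u \in K)) -> lexlt J K.
Proof.
move=> xJ xK same; apply/exists_inP; exists x; first by rewrite inE xJ xK.
apply/forall_inP => u; rewrite leNgt; apply: contraTN => ux.
by rewrite !inE (same u ux); case: (u \in K).
Qed.

Lemma lexlt_trans (J K L : {set S}) : lexlt J K -> lexlt K L -> lexlt J L.
Proof.
move=> /lexlt_exists [x [xJ xK Hx]] /lexlt_exists [y [yK yL Hy]].
case: (ltgtP x y) => hxy.
- apply: (lexlt_intro (x := x)) => [//||u ux]; first by rewrite -(Hy x hxy).
  by rewrite (Hx u ux) (Hy u (lt_trans ux hxy)).
- apply: (lexlt_intro (x := y)) => [|//|u uy]; first by rewrite (Hx y hxy).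
  by rewrite (Hx u (lt_trans uy hxy)) (Hy u uy).
- by rewrite hxy yK in xK.
Qed.

Lemma lexlt_irr (J : {set S}) : ~~ lexlt J J.
Proof. by apply/negP => /lexlt_exists [x [xJ xK _]]; rewrite xJ in xK. Qed.

Lemma deglex_trans (J K L : {set S}) : deglex_lt J K -> deglex_lt K L -> deglex_lt J L.
Proof.
rewrite !deglex_ltE => /orP [h1|/andP [/eqP e1 l1]] /orP [h2|/andP [/eqP e2 l2]].
- by rewrite (ltn_trans h1 h2).
- by rewrite -e2 h1.
- by rewrite e1 h2.
- by rewrite e1 e2 eqxx (lexlt_trans l1 l2) orbT.
Qed.

Lemma deglex_irr (J : {set S}) : ~~ deglex_lt J J.
Proof. by rewrite deglex_ltE ltnn eqxx (negbTE (lexlt_irr J)). Qed.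

Lemma deglex_ind (P : {set S} -> Prop) :
  (forall J, (forall K, deglex_lt K J -> P K) -> P J) -> forall J, P J.
Proof.
move=> IH J; have [n] := ubnP #|[set K | deglex_lt K J]|.
elim: n J => // n IHn J hn; apply: IH => K hK; apply: IHn.
move: hn; rewrite ltnS; apply: leq_trans; apply: proper_card; apply/properP; split.
  by apply/subsetP => K'; rewrite !inE => h; apply: deglex_trans h hK.
by exists K; rewrite !inE ?hK // (negbTE (deglex_irr K)).
Qed.

Lemma drop_min_subset (C : {set S}) : drop_min C \subset C.
Proof. by apply/subsetP => x /setIdP []. Qed.

Lemma drop_minS (C J : {set S}) : C \subset J -> drop_min C \subset drop_min J.
Proof.
move=> sCJ; apply/subsetP => x /setIdP [xC /exists_inP [y yC yx]].
by rewrite inE (subsetP sCJ x xC); apply/exists_inP; exists y => //; apply: (subsetP sCJ).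
Qed.

Lemma drop_min_setD1 (K : {set S}) m : m \in K -> (forall x, x \in K -> (m <= x)%O) ->
  drop_min K = K :\ m.
Proof.
move=> mK mmin; apply/setP => x; rewrite !inE andbC; case xK: (x \in K); rewrite ?andbT ?andbF //.
apply/exists_inP/idP => [[y yK yx]|xm]; first by apply: contraTneq yx => ->; rewrite -leNgt mmin.
by exists m; rewrite // lt_neqAle eq_sym xm mmin.
Qed.

Lemma deglex_setD1 (K : {set S}) m j : m \in K -> j \in K -> j != m ->
  (forall x, x \in K -> (m <= x)%O) -> deglex_lt (K :\ j) (K :\ m).
Proof.
move=> mK jK jm mmin; have cardKj : #|K :\ j| = #|K :\ m|.
  by move: (cardsD1 j K) (cardsD1 m K); rewrite jK mK /=; lia.
rewrite deglex_ltE cardKj ltnn eqxx /=.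
apply: (lexlt_intro (x := m)) => [||u um]; rewrite !inE ?eqxx ?mK 1?eq_sym ?jm //.
by case uK: (u \in K); rewrite ?andbF //; move: (mmin u uK); rewrite leNgt um.
Qed.

Lemma groebner_circuit_reduces (M Mbar : {set {set S}}) :
  groebner_circuits_spec M Mbar -> forall J, dependent M J ->
  exists2 K, K \in M :&: Mbar & drop_min K \subset drop_min J.
Proof.
move=> hMbar; apply: deglex_ind => J IH dJ; have [JMbar|nJMbar] := boolP (J \in Mbar).
  case/exists_inP: dJ => C CM sCJ; have [eCJ|nCJ] := eqVneq C J.
    by exists J; rewrite // inE -{1}eCJ CM JMbar.
  have CJ : deglex_lt C J by rewrite deglex_ltE proper_card // properEneq nCJ.
  have [K KMMbar sK] := IH C CJ (introT exists_inP (ex_intro2 _ _ C CM (subxx C))).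
  by exists K => //; apply: subset_trans sK (drop_minS sCJ).
move: nJMbar; rewrite hMbar dJ /= => /negbNE /exists_inP [K KMbar /andP [KJ /andP [sK _]]].
have dK : dependent M K by move: KMbar; rewrite hMbar => /andP [].
by have [K' K'MMbar sK'] := IH K KJ dK; exists K' => //; apply: subset_trans sK' sK.
Qed.

Section Matroid.
Variable M : {set {set S}}.
Hypothesis hM : is_circuit_system M.

Definition cl (X : {set S}) : {set S} :=
  [set y | (y \in X) || [exists C in M, (y \in C) && (C \subset y |: X)]].

Lemma subset_cl (X : {set S}) : X \subset cl X.
Proof. by apply/subsetP => x xX; rewrite inE xX. Qed.

Lemma clS (X Y : {set S}) : X \subset Y -> cl X \subset cl Y.
Proof.
move=> sXY; apply/subsetP => y; rewrite !inE => /orP [yX|/exists_inP [C CM /andP [yC sC]]].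
  by rewrite (subsetP sXY _ yX).
by apply/orP; right; apply/exists_inP; exists C; rewrite // yC (subset_trans sC) ?setUS.
Qed.

Lemma mem_cl_circuit (C : {set S}) c (X : {set S}) :
  C \in M -> c \in C -> C :\ c \subset X -> c \in cl X.
Proof.
move=> CM cC sCX; rewrite inE; apply/orP; right; apply/exists_inP; exists C => //.
rewrite cC; apply/subsetP => x xC; rewrite !inE.
by case: eqP => //= /eqP xc; apply: (subsetP sCX); rewrite !inE xc.
Qed.

Lemma strong_circuit_elimination (C1 C2 : {set S}) e f :
  C1 \in M -> C2 \in M -> C1 != C2 -> e \in C1 -> e \in C2 -> f \in C1 -> f \notin C2 ->
  exists2 C3, C3 \in M & (f \in C3) && (C3 \subset (C1 :|: C2) :\ e).
Proof.
case: hM => _ hinc helim; have [n] := ubnP #|C1 :|: C2|.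
elim: n C1 C2 e f => // n IH C1 C2 e f hn C1M C2M C12 eC1 eC2 fC1 fC2.
have [C3 C3M sC3] := helim C1 C2 e C1M C2M C12 (introT setIP (conj eC1 eC2)).
have [fC3|fC3] := boolP (f \in C3); first by exists C3; rewrite ?fC3.
have [g gC3 gC1] : exists2 g, g \in C3 & g \notin C1.
  apply/subsetPn; apply: contra fC3 => s31.
  by rewrite (hinc _ _ C3M C1M s31).
have sC3U : C3 \subset C1 :|: C2 by apply: subset_trans sC3 (subsetDl _ _).
have gC2 : g \in C2 by move: (subsetP sC3U g gC3); rewrite inE (negbTE gC1).
have eC3 : e \notin C3 by apply/negP => /(subsetP sC3); rewrite !inE eqxx.
have C23 : C2 != C3 by apply: contraNneq eC3 => <-.
have hn1 : (#|C2 :|: C3| < n)%N.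
  rewrite -ltnS; apply: leq_trans hn; apply: proper_card; apply/properP; split.
    by rewrite subUset subsetUr sC3U.
  by exists f; rewrite !inE ?fC1 // negb_or fC2 fC3.
have [C4 C4M /andP [eC4 sC4]] := IH C2 C3 g e hn1 C2M C3M C23 gC2 gC3 eC2 eC3.
have sC4U : C4 \subset C1 :|: C2.
  by apply: subset_trans sC4 (subset_trans (subsetDl _ _) _); rewrite subUset subsetUr sC3U.
have fC4 : f \notin C4.
  by apply: contraNN fC3 => /(subsetP sC4); rewrite !inE (negbTE fC2) /= => /andP [].
have gC4 : g \notin C4 by apply/negP => /(subsetP sC4); rewrite !inE eqxx.
have hn2 : (#|C1 :|: C4| < n)%N.
  rewrite -ltnS; apply: leq_trans hn; apply: proper_card; apply/properP; split.
    by rewrite subUset subsetUl sC4U.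
  by exists g; rewrite !inE ?gC2 ?orbT // negb_or gC1 gC4.
have C14 : C1 != C4 by apply: contraNneq fC4 => <-.
have [C5 C5M /andP [fC5 sC5]] := IH C1 C4 e f hn2 C1M C4M C14 eC1 eC4 fC1 fC4.
exists C5 => //; rewrite fC5 /=; apply: subset_trans sC5 _.
by apply: setSD; rewrite subUset subsetUl sC4U.
Qed.

Lemma cl_idem (X : {set S}) : cl (cl X) \subset cl X.
Proof.
apply/subsetP => y; rewrite [y \in cl (cl X)]inE => /orP [//|/exists_inP [C CM /andP [yC sC]]].
(* Induction on #|C :\: X|: strong elimination against a circuit witnessing z \in cl X
   removes a point z of C outside X. *)
have [k] := ubnP #|C :\: X|; elim: k C y CM yC sC => // k IH C y CM yC sC hk.
apply/negPn/negP => yX.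
have yX' : y \notin X by apply: contra yX; apply: (subsetP (subset_cl X)).
have [sCX|/subsetPn [z zC zX]] := boolP (C \subset y |: X).
  by case/negP: yX; rewrite inE; apply/orP; right; apply/exists_inP; exists C; rewrite ?yC.
move: zX; rewrite in_setU1 negb_or => /andP [zy zX].
have : z \in cl X by move: (subsetP sC z zC); rewrite in_setU1 (negbTE zy).
rewrite inE (negbTE zX) /= => /exists_inP [D DM /andP [zD sD]].
have yD : y \notin D.
  by apply: contraNN yX' => /(subsetP sD); rewrite in_setU1 eq_sym (negbTE zy).
have CD : C != D by apply: contraNneq yD => <-.
have [C3 C3M /andP [yC3 sC3]] := strong_circuit_elimination CM DM CD zC zD yC yD.
have sC3X : C3 :\: X \subset C :\: X.
  apply/subsetP => x /setDP [xC3 xX]; move: (subsetP sC3 x xC3); rewrite !inE xX.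
  case/andP=> xz /orP [-> //|xD]; move: (subsetP sD x xD).
  by rewrite in_setU1 (negbTE xz) (negbTE xX).
case/negP: yX; apply: (IH C3) => //.
  apply/subsetP => x xC3; move: (subsetP sC3 x xC3); rewrite !inE => /andP [xz /orP [] xC].
    by move: (subsetP sC x xC); rewrite !inE.
  by move: (subsetP sD x xC); rewrite !inE (negbTE xz) => /= ->; rewrite orbT.
rewrite -ltnS; apply: leq_trans hk; apply: proper_card; apply/properP; split => //.
exists z; first by rewrite !inE zX zC.
by rewrite !inE zX /=; apply/negP => /(subsetP sC3); rewrite !inE eqxx.
Qed.

End Matroid.

End Combinatorics.

Section ExteriorAlgebra.
Context {d : Order.disp_t} (S : finOrderType d) (R : comPzRingType).
Local Notation ext := {ffun {set S} -> R^o}.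
Local Notation tmon := (@tmon d S R).
Local Notation mono_mul := (@mono_mul d S R).
Local Notation emul := (@emul d S R).

Lemma tmonE J K : tmon J K = (K == J)%:R.
Proof. by rewrite ffunE. Qed.

Lemma ext_decomp (x : ext) : x = \sum_K x K *: tmon K.
Proof.
apply/ffunP => K; rewrite sum_ffunE (bigD1 K) //= big1 => [|L /negbTE nL].
  by rewrite ffunE tmonE eqxx addr0; exact: (esym (mulr1 _)).
by rewrite ffunE tmonE eq_sym nL scaler0.
Qed.

Lemma emulDl (x y z : ext) : emul (x + y) z = emul x z + emul y z.
Proof.
rewrite /emul -big_split /=; apply: eq_bigr => J _.
by rewrite -big_split; apply: eq_bigr => K _; rewrite ffunE mulrDl scalerDl.
Qed.

Lemma emulDr (x y z : ext) : emul x (y + z) = emul x y + emul x z.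
Proof.
rewrite /emul -big_split /=; apply: eq_bigr => J _.
by rewrite -big_split; apply: eq_bigr => K _; rewrite ffunE mulrDr scalerDl.
Qed.

Lemma emulZl c (x y : ext) : emul (c *: x) y = c *: emul x y.
Proof.
rewrite /emul scaler_sumr; apply: eq_bigr => J _.
by rewrite scaler_sumr; apply: eq_bigr => K _; rewrite ffunE scalerA mulrA.
Qed.

Lemma emulZr c (x y : ext) : emul x (c *: y) = c *: emul x y.
Proof.
rewrite /emul scaler_sumr; apply: eq_bigr => J _.
by rewrite scaler_sumr; apply: eq_bigr => K _; rewrite ffunE scalerA mulrCA.
Qed.

Lemma emul0l (y : ext) : emul 0 y = 0.
Proof.
by rewrite /emul big1 // => J _; rewrite big1 // => K _; rewrite ffunE mul0r scale0r.
Qed.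

Lemma emul0r (y : ext) : emul y 0 = 0.
Proof.
by rewrite /emul big1 // => J _; rewrite big1 // => K _; rewrite ffunE mulr0 scale0r.
Qed.

Lemma emul_suml I (r : seq I) (P : pred I) (F : I -> ext) z :
  emul (\sum_(i <- r | P i) F i) z = \sum_(i <- r | P i) emul (F i) z.
Proof. exact: (big_morph (emul^~ z) (fun x y => emulDl x y z) (emul0l z)). Qed.

Lemma emul_sumr I (r : seq I) (P : pred I) (F : I -> ext) z :
  emul z (\sum_(i <- r | P i) F i) = \sum_(i <- r | P i) emul z (F i).
Proof. exact: (big_morph (emul z) (emulDr z) (emul0r z)). Qed.

Lemma emul_tmon J K : emul (tmon J) (tmon K) = mono_mul J K.
Proof.
rewrite /emul (bigD1 J) //= [X in _ + X]big1 => [|J' nJ']; last first.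
  by rewrite big1 // => K' _; rewrite tmonE (negbTE nJ') mul0r scale0r.
rewrite addr0 (bigD1 K) //= big1 => [|K' nK']; last first.
  by rewrite !tmonE (negbTE nK') mulr0 scale0r.
by rewrite !tmonE !eqxx mulr1 scale1r addr0.
Qed.

Lemma emul_decompl (x y : ext) : emul x y = \sum_A x A *: emul (tmon A) y.
Proof. by rewrite {1}(ext_decomp x) emul_suml; apply: eq_bigr => A _; rewrite emulZl. Qed.

Lemma emul_decompr (x y : ext) : emul x y = \sum_C y C *: emul x (tmon C).
Proof. by rewrite {1}(ext_decomp y) emul_sumr; apply: eq_bigr => C _; rewrite emulZr. Qed.

Lemma inv_countE (J K : {set S}) :
  inv_count J K = (\sum_(x in J) \sum_(y in K) ((y < x)%O : nat))%N.
Proof.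
rewrite /inv_count -sum1_card pair_big_dep /= big_mkcond [RHS]big_mkcond /=.
by apply: eq_bigr => -[x y] _; rewrite inE /=; case: (x \in J); case: (y \in K).
Qed.

Lemma inv_countUl (A B C : {set S}) : [disjoint A & B] ->
  inv_count (A :|: B) C = (inv_count A C + inv_count B C)%N.
Proof. by move=> dAB; rewrite !inv_countE big_setU_disjoint. Qed.

Lemma inv_countUr (A B C : {set S}) : [disjoint B & C] ->
  inv_count A (B :|: C) = (inv_count A B + inv_count A C)%N.
Proof.
move=> dBC; rewrite !inv_countE -big_split /=.
by apply: eq_bigr => x _; rewrite big_setU_disjoint.
Qed.

Lemma mono_mul_assoc A B C :
  emul (mono_mul A B) (tmon C) = emul (tmon A) (mono_mul B C).
Proof.
have disjU (X Y Z : {set S}) : [disjoint X :|: Y & Z] = [disjoint X & Z] && [disjoint Y & Z].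
  by rewrite -!setI_eq0 setIUl setU_eq0.
have disjUr (X Y Z : {set S}) : [disjoint X & Y :|: Z] = [disjoint X & Y] && [disjoint X & Z].
  by rewrite -!setI_eq0 setIUr setU_eq0.
rewrite /mono_mul; case: ifP => dAB; case: ifP => dBC;
  rewrite ?emulZl ?emulZr ?emul0l ?emul0r ?emul_tmon /mono_mul
          ?disjU ?disjUr ?dAB ?dBC ?andbT ?andbF ?scaler0 //=.
case: ifP => dAC; rewrite ?scaler0 // !scalerA -!exprD setUA.
by rewrite inv_countUl // inv_countUr // addnA addnC.
Qed.

Lemma emul_assoc (x y z : ext) : emul (emul x y) z = emul x (emul y z).
Proof.
transitivity (\sum_A \sum_B \sum_C (x A * y B * z C) *: emul (tmon A) (mono_mul B C)).
  rewrite emul_decompr (eq_bigr (fun C => \sum_A \sum_B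
      (x A * y B * z C) *: emul (tmon A) (mono_mul B C))); last first.
    move=> C _; rewrite (emul_decompl x y) emul_suml scaler_sumr; apply: eq_bigr => A _.
    rewrite emulZl (emul_decompr (tmon A) y) emul_suml !scaler_sumr; apply: eq_bigr => B _.
    by rewrite emulZl emul_tmon mono_mul_assoc !scalerA [z C * _]mulrC.
  by rewrite exchange_big /=; apply: eq_bigr => A _; rewrite exchange_big.
rewrite emul_decompl; apply: eq_bigr => A _.
rewrite (emul_decompl y z) emul_sumr scaler_sumr; apply: eq_bigr => B _.
rewrite emulZr (emul_decompr (tmon B) z) emul_sumr !scaler_sumr; apply: eq_bigr => C _.
by rewrite emulZr emul_tmon !scalerA mulrA.
Qed.

Lemma emul1l (x : ext) : emul (tmon set0) x = x.
Proof.
rewrite [RHS]ext_decomp emul_decompr; apply: eq_bigr => K _.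
by rewrite emul_tmon /mono_mul -setI_eq0 set0I eqxx set0U inv_countE big_set0 scale1r.
Qed.

Lemma emul1r (x : ext) : emul x (tmon set0) = x.
Proof.
rewrite [RHS]ext_decomp emul_decompl; apply: eq_bigr => K _.
rewrite emul_tmon /mono_mul -setI_eq0 setI0 eqxx setU0 inv_countE big1 ?scale1r //.
by move=> i _; rewrite big_set0.
Qed.

End ExteriorAlgebra.

Section Substitution.
Context {d : Order.disp_t} (S : finOrderType d) (R : comPzRingType).
Local Notation ext := {ffun {set S} -> R^o}.
Local Notation tmon := (@tmon d S R).
Local Notation mono_mul := (@mono_mul d S R).
Local Notation emul := (@emul d S R).

Definition le_opt (o1 o2 : option S) : bool :=
  if o1 is Some x then (if o2 is Some y then (x <= y)%O else false) else true.

(* [sigma] encodes the R-algebra endomorphism [subst] of E with t_s |-> t_(sigma s), and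
   t_s |-> 0 where [sigma s = None]. *)
Variable sigma : S -> option S.

Definition tgt (a : S) : S := odflt a (sigma a).

Definition admissible (K : {set S}) : bool :=
  [forall a in K, sigma a != None] &&
  [forall a in K, forall b in K, (tgt a == tgt b) ==> (a == b)].

Definition tgt_cross (A B : {set S}) : nat :=
  (\sum_(a in A) \sum_(b in B) (((a < b)%O && (tgt b < tgt a)%O) : nat))%N.

Definition tgt_inversions (K : {set S}) : nat := tgt_cross K K.

Definition subst_mon (K : {set S}) : ext :=
  if admissible K then (-1) ^+ tgt_inversions K *: tmon (tgt @: K) else 0.

Definition subst (x : ext) : ext := \sum_K x K *: subst_mon K.

Lemma admissible_inj (K : {set S}) : admissible K -> {in K &, injective tgt}.
Proof.
case/andP=> _ /forallP H a b aK bK eab.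
by move: (H a); rewrite aK /= => /forallP/(_ b); rewrite bK eab eqxx /= => /eqP.
Qed.

Lemma admissible_some (K : {set S}) a : admissible K -> a \in K -> sigma a = Some (tgt a).
Proof. by case/andP=> /forallP/(_ a) + _ aK; rewrite aK /= /tgt; case: (sigma a). Qed.

Lemma admissibleP (K : {set S}) :
  (forall a, a \in K -> sigma a != None) -> {in K &, injective tgt} -> admissible K.
Proof.
move=> Kdef Kinj; apply/andP; split; apply/forall_inP => a aK; first exact: Kdef.
by apply/forall_inP => b bK; apply/implyP => /eqP /(Kinj a b aK bK) ->.
Qed.

Lemma admissibleS (A B : {set S}) : A \subset B -> admissible B -> admissible A.
Proof.
move=> sAB aB; apply: admissibleP => [a aA|a b aA bA].
  by rewrite (admissible_some aB (subsetP sAB a aA)).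
by apply: (admissible_inj aB); apply: (subsetP sAB).
Qed.

Lemma subst_mon_nonadmissible (K : {set S}) : ~~ admissible K -> subst_mon K = 0.
Proof. by rewrite /subst_mon => /negbTE ->. Qed.

Lemma subst_mon_noninj (K : {set S}) a b :
  a \in K -> b \in K -> a != b -> tgt a = tgt b -> subst_mon K = 0.
Proof.
move=> aK bK nab eab; apply: subst_mon_nonadmissible; apply: contra nab => aKa.
by rewrite (admissible_inj aKa aK bK eab).
Qed.

Lemma substD x y : subst (x + y) = subst x + subst y.
Proof. by rewrite /subst -big_split; apply: eq_bigr => K _; rewrite ffunE scalerDl. Qed.

Lemma substZ c x : subst (c *: x) = c *: subst x.
Proof. by rewrite /subst scaler_sumr; apply: eq_bigr => K _; rewrite ffunE scalerA. Qed.

Lemma subst0 : subst 0 = 0.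
Proof. by rewrite /subst big1 // => K _; rewrite ffunE scale0r. Qed.

Lemma subst_sum I (r : seq I) (P : pred I) (F : I -> ext) :
  subst (\sum_(i <- r | P i) F i) = \sum_(i <- r | P i) subst (F i).
Proof. exact: (big_morph subst substD subst0). Qed.

Lemma subst_tmon K : subst (tmon K) = subst_mon K.
Proof.
rewrite /subst (bigD1 K) //= big1 => [|L nL]; last by rewrite tmonE (negbTE nL) scale0r.
by rewrite tmonE eqxx scale1r addr0.
Qed.

Lemma tgt_inversionsU (A B : {set S}) : [disjoint A & B] ->
  tgt_inversions (A :|: B) =
  (tgt_inversions A + tgt_cross A B + (tgt_cross B A + tgt_inversions B))%N.
Proof.
move=> dAB; rewrite /tgt_inversions /tgt_cross !big_setU_disjoint //.
rewrite (eq_bigr (fun a => \sum_(b in A) (((a < b)%O && (tgt b < tgt a)%O) : nat) +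
     \sum_(b in B) (((a < b)%O && (tgt b < tgt a)%O) : nat))%N) => [|a _]; last first.
  by rewrite big_setU_disjoint.
rewrite big_split /=; congr (_ + _)%N.
by rewrite -big_split /=; apply: eq_bigr => a _; rewrite big_setU_disjoint.
Qed.

Lemma lt_swap_count (a b x y : S) : a != b -> x != y ->
  (((b < a)%O : nat) + (((a < b)%O && (y < x)%O) : nat) + (((b < a)%O && (x < y)%O) : nat) =
   ((y < x)%O : nat) + 2 * (((b < a)%O && (x < y)%O) : nat))%N.
Proof.
move=> nab nxy; case: (ltgtP a b) => hab; last by rewrite hab eqxx in nab.
all: by case: (ltgtP x y) => hxy; last by rewrite hxy eqxx in nxy.
Qed.

(* Each pair (a, b) in A x B is an inversion of exactly one of (A, B) and (tgt A, tgt B),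
   unless [tgt] reverses it, in which case it is counted twice. *)
Lemma inv_count_tgt (A B : {set S}) : [disjoint A & B] -> admissible (A :|: B) ->
  (inv_count A B + tgt_inversions (A :|: B) =
   tgt_inversions A + tgt_inversions B + inv_count (tgt @: A) (tgt @: B) +
   2 * tgt_cross B A)%N.
Proof.
move=> dAB aU; have iU := admissible_inj aU.
rewrite tgt_inversionsU //.
have iA : {in A &, injective tgt} by move=> a b aA bA; apply: iU; rewrite inE ?aA ?bA.
have iB : {in B &, injective tgt} by move=> a b aB bB; apply: iU; rewrite inE ?aB ?bB orbT.
have -> : inv_count (tgt @: A) (tgt @: B) =
    (\sum_(a in A) \sum_(b in B) ((tgt b < tgt a)%O : nat))%N.
  by rewrite inv_countE (big_imset _ iA); apply: eq_bigr => a _; rewrite (big_imset _ iB).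
have -> : tgt_cross B A =
    (\sum_(a in A) \sum_(b in B) (((b < a)%O && (tgt a < tgt b)%O) : nat))%N.
  by rewrite /tgt_cross exchange_big.
have pointwise : (inv_count A B + tgt_cross A B +
    \sum_(a in A) \sum_(b in B) (((b < a)%O && (tgt a < tgt b)%O) : nat) =
    \sum_(a in A) \sum_(b in B) ((tgt b < tgt a)%O : nat) +
    2 * \sum_(a in A) \sum_(b in B) (((b < a)%O && (tgt a < tgt b)%O) : nat))%N.
  rewrite inv_countE /tgt_cross -!big_split big_distrr /= -big_split /=.
  apply: eq_bigr => a aA; rewrite -!big_split big_distrr /= -big_split /=.
  apply: eq_bigr => b bB; have nab : a != b.
    by apply: contraTneq bB => <-; rewrite (disjointFr dAB aA).
  apply: lt_swap_count => //; apply: contra nab => /eqP /iU -> //.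
    by rewrite inE aA.
  by rewrite inE bB orbT.
by move: pointwise; lia.
Qed.

Lemma admissibleU (A B : {set S}) : admissible A -> admissible B ->
  [disjoint tgt @: A & tgt @: B] -> admissible (A :|: B).
Proof.
move=> aA aB dtAB; apply: admissibleP => [a|a b].
  by case/setUP => aX; [rewrite (admissible_some aA aX) | rewrite (admissible_some aB aX)].
have cross x y : x \in A -> y \in B -> tgt x = tgt y -> x = y.
  by move=> xA yB exy; move: (disjointFr dtAB (imset_f tgt xA)); rewrite exy imset_f.
case/setUP => aX /setUP [] bX eab.
- exact: (admissible_inj aA).
- exact: cross.
- exact/esym/cross.
- exact: (admissible_inj aB).
Qed.

Lemma subst_mono_mul (A B : {set S}) : subst (mono_mul A B) = emul (subst_mon A) (subst_mon B).
Proof.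
have [aA|naA] := boolP (admissible A); last first.
  rewrite subst_mon_nonadmissible // emul0l /mono_mul; case: ifP => _; last exact: subst0.
  rewrite substZ subst_tmon subst_mon_nonadmissible ?scaler0 //.
  by apply: contra naA; apply: admissibleS; apply: subsetUl.
have [aB|naB] := boolP (admissible B); last first.
  rewrite (subst_mon_nonadmissible naB) emul0r /mono_mul; case: ifP => _; last exact: subst0.
  rewrite substZ subst_tmon subst_mon_nonadmissible ?scaler0 //.
  by apply: contra naB; apply: admissibleS; apply: subsetUr.
rewrite /subst_mon aA aB emulZl emulZr emul_tmon scalerA /mono_mul.
case dAB: [disjoint A & B]; last first.
  rewrite subst0; case: ifP => dtAB; rewrite ?scaler0 //.
  case/negP: dAB; rewrite -setI_eq0; apply/set0Pn => -[x /setIP [xA xB]].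
  by move: (disjointFr dtAB (imset_f tgt xA)); rewrite (imset_f tgt xB).
rewrite substZ subst_tmon /subst_mon.
have [aU|naU] := boolP (admissible (A :|: B)); last first.
  by case: ifP => dtAB; rewrite ?scaler0 //; case/negP: naU; apply: admissibleU.
have dtAB : [disjoint tgt @: A & tgt @: B].
  rewrite -setI_eq0; apply/eqP/setP => y; rewrite !inE.
  apply/negP => /andP [/imsetP [a aA' ->] /imsetP [b bB eab]].
  have ab : a = b by apply: (admissible_inj aU); rewrite ?inE ?aA' ?bB ?orbT.
  by move: (disjointFr dAB aA'); rewrite ab bB.
rewrite dtAB imsetU !scalerA -!exprD.
by rewrite inv_count_tgt // sign_add_double.
Qed.

Lemma subst_emul (x y : ext) : subst (emul x y) = emul (subst x) (subst y).
Proof.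
have substE z : subst z = \sum_K z K *: subst_mon K by [].
rewrite {1}/emul subst_sum [subst x]substE emul_suml; apply: eq_bigr => J _.
rewrite subst_sum emulZl [subst y]substE emul_sumr scaler_sumr; apply: eq_bigr => K _.
by rewrite substZ subst_mono_mul emulZr scalerA.
Qed.

Lemma subst_os_gen_sum (C : {set S}) :
  subst (os_gen R C) =
  \sum_(j in C) (-1) ^+ #|[set i in C | (i < j)%O]| *: subst_mon (C :\ j).
Proof. by rewrite /os_gen subst_sum; apply: eq_bigr => j _; rewrite substZ subst_tmon. Qed.

Lemma admissible_swap (C : {set S}) a b : {in C, forall x, sigma x != None} ->
  a \in C -> b \in C -> a != b -> tgt a = tgt b ->
  admissible (C :\ a) -> admissible (C :\ b).
Proof.
move=> Cdef aC bC nab eab aCa; apply: admissibleP => [x /setD1P [_ /Cdef] //|x y].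
pose swap z := if z == a then b else z.
have swapC z : z \in C :\ b -> swap z \in C :\ a.
  rewrite !inE /swap => /andP [zb zC]; case: (eqVneq z a) => [_|-> //].
  by rewrite eq_sym nab bC.
have tgt_swap z : tgt (swap z) = tgt z by rewrite /swap; case: eqP => // ->.
move=> xC yC exy; have := admissible_inj aCa (swapC _ xC) (swapC _ yC).
rewrite !tgt_swap => /(_ exy); move: xC yC; rewrite !inE /swap => /andP [xb _] /andP [yb _].
case: eqP => [->|_]; case: eqP => [->|_] // eb.
- by rewrite eb eqxx in yb.
- by rewrite -eb eqxx in xb.
Qed.

Lemma tgt_imsetD1 (C : {set S}) a b : b \in C -> b != a -> tgt a = tgt b ->
  tgt @: (C :\ a) = tgt @: C.
Proof.
move=> bC ba eab; apply/setP => y; apply/imsetP/imsetP => [[x /setD1P [_ xC] ->]|[x xC ->]].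
  by exists x.
by case: (eqVneq x a) => [->|xa]; [exists b; rewrite ?inE ?ba | exists x; rewrite ?inE ?xa].
Qed.

Lemma tgt_inversionsU1 (b : S) (X : {set S}) : b \notin X ->
  tgt_inversions (b |: X) = (tgt_inversions X + \sum_(x in X)
    ((((b < x)%O && (tgt x < tgt b)%O) : nat) + (((x < b)%O && (tgt b < tgt x)%O) : nat)))%N.
Proof.
move=> bX; rewrite tgt_inversionsU ?disjoints1 //.
rewrite /tgt_inversions /tgt_cross !big_set1 ltxx big_split /=.
under [X in (_ + (X + _))%N]eq_bigr => x _ do rewrite big_set1.
by rewrite add0n [RHS]addnC addnA.
Qed.

Lemma pair_terms_even (a b x q tx : S) : (a < b)%O -> x != a -> x != b -> tx != q ->
  ~~ odd (((x < a)%O : nat) + ((x < b)%O : nat) +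
          (((b < x)%O && (tx < q)%O) : nat) + (((x < b)%O && (q < tx)%O) : nat) +
          (((a < x)%O && (tx < q)%O) : nat) + (((x < a)%O && (q < tx)%O) : nat))%N.
Proof.
move=> ab xa xb tq.
case: (ltgtP tx q) => hq; last by rewrite hq eqxx in tq.
all: case: (ltgtP x a) => hxa; last by rewrite hxa eqxx in xa.
all: case: (ltgtP x b) => hxb; last by rewrite hxb eqxx in xb.
all: rewrite //=.
all: try by move: (lt_trans hxa ab); rewrite ltNge le_eqVlt hxb orbT.
all: try by move: (lt_trans ab hxb); rewrite ltNge le_eqVlt hxa orbT.
Qed.

(* The terms of [os_gen C] indexed by a and b are mapped to the same monomial with
   opposite signs. *)
Lemma os_gen_pair_signs_odd (C : {set S}) a b : a \in C -> b \in C -> (a < b)%O ->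
  tgt a = tgt b -> admissible (C :\ a) ->
  odd (#|[set i in C | (i < a)%O]| + tgt_inversions (C :\ a) +
       (#|[set i in C | (i < b)%O]| + tgt_inversions (C :\ b))).
Proof.
move=> aC bC ab eab aCa; have nab := negbT (lt_eqF ab).
set X := C :\ a :\ b.
have bX : b \notin X by rewrite !inE eqxx.
have aX : a \notin X by rewrite !inE eqxx andbF.
have eCa : C :\ a = b |: X by rewrite setD1K // !inE eq_sym nab.
have eCb : C :\ b = a |: X.
  by apply/setP => y; rewrite !inE; case: (eqVneq y a) => [->|] //=; rewrite nab aC.
have abX : a \notin b |: X by rewrite in_setU1 (negbTE nab) (negbTE aX).
have eC : C = a |: (b |: X) by rewrite -eCa setD1K.
have hna : #|[set i in C | (i < a)%O]| = (\sum_(x in X) ((x < a)%O : nat))%N.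
  by rewrite card_set_sum eC big_setU1 // big_setU1 //= ltxx ltNge (ltW ab).
have hnb : #|[set i in C | (i < b)%O]| = (1 + \sum_(x in X) ((x < b)%O : nat))%N.
  by rewrite card_set_sum eC big_setU1 // big_setU1 //= ltxx ab.
rewrite hna hnb eCa eCb !tgt_inversionsU1 // -eab.
have terms_even := pair_terms_even (q := tgt a) ab.
have : ~~ odd (\sum_(x in X) (((x < a)%O : nat) + ((x < b)%O : nat) +
    (((b < x)%O && (tgt x < tgt a)%O) : nat) + (((x < b)%O && (tgt a < tgt x)%O) : nat) +
    (((a < x)%O && (tgt x < tgt a)%O) : nat) + (((x < a)%O && (tgt a < tgt x)%O) : nat)))%N.
  apply: even_big_sum => x xX; apply: terms_even.
  - by apply: contraTneq xX => ->.
  - by apply: contraTneq xX => ->.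
  apply: contraTneq xX => txa; apply/negP => xX.
  have := admissible_inj aCa; rewrite eCa => /(_ x b); rewrite !in_setU1 eqxx xX orbT.
  by move=> /(_ isT isT); rewrite txa eab => /(_ erefl) exb; rewrite -exb xX in bX.
rewrite !big_split /= !oddD /=.
by case: (odd (tgt_inversions X)); case: (odd _); case: (odd _); case: (odd _);
  case: (odd _); case: (odd _); case: (odd _).
Qed.

Lemma subst_os_gen_pair (C : {set S}) a b : {in C, forall x, sigma x != None} ->
  a \in C -> b \in C -> (a < b)%O -> tgt a = tgt b -> subst (os_gen R C) = 0.
Proof.
move=> Cdef aC bC ab eab; have nab := negbT (lt_eqF ab).
rewrite subst_os_gen_sum (bigD1 a) //= (bigD1 b) /=; last by rewrite bC eq_sym nab.
rewrite big1 => [|j /andP [/andP [jC ja] jb]]; last first.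
  by rewrite (@subst_mon_noninj _ a b) ?scaler0 // !inE ?aC ?bC andbT eq_sym.
rewrite addr0; have [aCa|naCa] := boolP (admissible (C :\ a)); last first.
  rewrite !subst_mon_nonadmissible ?scaler0 ?addr0 //.
  by apply: contra naCa; apply: admissible_swap; rewrite // eq_sym.
rewrite /subst_mon aCa (admissible_swap Cdef aC bC nab eab aCa).
rewrite (tgt_imsetD1 bC _ eab) 1?eq_sym // (tgt_imsetD1 aC nab (esym eab)).
rewrite !scalerA -!exprD -scalerDl sign_sum_odd ?scale0r //.
exact: os_gen_pair_signs_odd.
Qed.

(* The image of [os_gen C] vanishes as soon as the minimum of [sigma] over C, with
   [None] as bottom, is attained twice. *)
Lemma subst_os_gen (C : {set S}) :
  (forall c0, c0 \in C -> exists2 c, c \in C & (c != c0) && le_opt (sigma c) (sigma c0)) ->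
  subst (os_gen R C) = 0.
Proof.
move=> min_twice.
have [/exists_inP [c0 c0C /eqP c0N]|/exists_inPn Cdef] := boolP [exists c in C, sigma c == None].
  case: (min_twice c0 c0C) => c cC /andP [cc0]; rewrite c0N; case E: (sigma c) => //= _.
  rewrite subst_os_gen_sum big1 // => j jC; rewrite subst_mon_nonadmissible ?scaler0 //.
  apply/negP => aCj; case: (eqVneq j c0) => [jc0|jc0].
    by have := admissible_some aCj (a := c); rewrite E !inE cC jc0 cc0 => /(_ isT).
  by have := admissible_some aCj (a := c0); rewrite c0N !inE c0C eq_sym jc0 => /(_ isT).
case: (set_0Vmem C) => [->|[x0 x0C]]; first by rewrite subst_os_gen_sum big_set0.
case: (arg_minP tgt x0C) => c0 c0C c0min.
case: (min_twice c0 c0C) => c cC /andP [cc0].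
have tgt1 z : sigma z != None -> sigma z = Some (tgt z) by rewrite /tgt; case: (sigma z).
rewrite (tgt1 _ (Cdef c cC)) (tgt1 _ (Cdef c0 c0C)) /= => le_c.
have e : tgt c = tgt c0 by apply/le_anti; rewrite le_c c0min.
case: (ltgtP c c0) => hc.
- exact: (subst_os_gen_pair Cdef cC c0C hc e).
- exact: (subst_os_gen_pair Cdef c0C cC hc (esym e)).
- by rewrite hc eqxx in cc0.
Qed.

End Substitution.

Section NoBrokenCircuit.
Context {d : Order.disp_t} (S : finOrderType d) (R : comPzRingType).
Local Notation ext := {ffun {set S} -> R^o}.
Local Notation tmon := (@tmon d S R).
Variable M : {set {set S}}.
Hypothesis hM : is_circuit_system M.
Variable J : {set S}.
Hypothesis J_nbc : forall C, C \in M -> ~~ (drop_min C \subset J).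

Definition cl_above (j : S) : {set S} := cl M [set x in J | (j <= x)%O].

Definition level (y : S) : option S :=
  [pick j in J | (y \in cl_above j) && [forall j' in J, (j < j')%O ==> (y \notin cl_above j')]].

Lemma cl_above_anti j j' : (j <= j')%O -> cl_above j' \subset cl_above j.
Proof.
move=> jj'; apply: clS; apply/subsetP => x /setIdP [xJ j'x].
by rewrite inE xJ (le_trans jj' j'x).
Qed.

Lemma levelP y j : level y = Some j ->
  [/\ j \in J, y \in cl_above j & forall j', j' \in J -> (j < j')%O -> y \notin cl_above j'].
Proof.
rewrite /level; case: pickP => // j0 /andP [j0J /andP [yU /forall_inP max]] [<-].
by split=> // j' /max /implyP.
Qed.

Lemma level_ge y j0 : j0 \in J -> y \in cl_above j0 -> exists2 j, level y = Some j & (j0 <= j)%O.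
Proof.
move=> j0J yU; have j0T : j0 \in [set j in J | y \in cl_above j] by rewrite inE j0J yU.
case: (arg_maxP id j0T) => j1 /setIdP [j1J yU1] j1max.
have lvl1 : [&& j1 \in J, y \in cl_above j1 &
    [forall j' in J, (j1 < j')%O ==> (y \notin cl_above j')]].
  rewrite j1J yU1; apply/forall_inP => j' j'J; apply/implyP => lt1; apply/negP => yU'.
  have j'T : j' \in [set j in J | y \in cl_above j] by rewrite inE j'J yU'.
  by move: (j1max j' j'T); rewrite /= leNgt lt1.
rewrite /level; case: pickP => [j /andP [jJ /andP [yUj /forall_inP jmax]]|/(_ j1)]; last first.
  by rewrite lvl1.
exists j => //; rewrite leNgt; apply/negP => jj0.
by have := jmax j1 j1J; rewrite (lt_le_trans jj0 (j1max j0 j0T)) yU1.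
Qed.

Lemma no_circuit_in_J (C : {set S}) : C \in M -> ~~ (C \subset J).
Proof. by move=> CM; apply: contra (J_nbc CM); apply: subset_trans (drop_min_subset C). Qed.

Lemma no_broken_circuit (C : {set S}) y : C \in M -> y \in C ->
  (forall c, c \in C -> c != y -> (y < c)%O) -> ~~ (C :\ y \subset J).
Proof.
move=> CM yC ymin; apply: contra (J_nbc CM) => sJ; apply: subset_trans sJ.
apply/subsetP => x /setIdP [xC /exists_inP [z zC zx]]; rewrite !inE xC andbT.
apply: contraTneq zx => ->; have [->|zy] := eqVneq z y; first by rewrite ltxx.
by rewrite ltNge (ltW (ymin z zC zy)).
Qed.

Lemma level_J j : j \in J -> level j = Some j.
Proof.
move=> jJ; have jU : j \in cl_above j by apply: (subsetP (subset_cl _ _)); rewrite inE jJ lexx.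
have [j1 e1 le1] := level_ge jJ jU; have [j1J jU1 _] := levelP e1.
have [ej|nj] := eqVneq j j1; first by rewrite e1 ej.
have lt1 : (j < j1)%O by rewrite lt_neqAle nj le1.
move: jU1; rewrite inE => /orP [|/exists_inP [C CM /andP [jC sC]]].
  by rewrite inE jJ /= leNgt lt1.
case/negP: (no_circuit_in_J CM); apply: subset_trans sC _.
by apply/subsetP => x /setU1P [-> //|/setIdP []].
Qed.

Lemma level_le y j : level y = Some j -> (j <= y)%O.
Proof.
move=> e; have [jJ yU _] := levelP e; rewrite leNgt; apply/negP => yj.
move: yU; rewrite inE => /orP [|/exists_inP [C CM /andP [yC sC]]].
  by rewrite inE leNgt yj andbF.
have above x : x \in C -> x != y -> (x \in J) && (j <= x)%O.
  by move=> xC xy; move: (subsetP sC x xC); rewrite in_setU1 (negbTE xy) inE.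
have ymin c : c \in C -> c != y -> (y < c)%O.
  by move=> cC cy; case/andP: (above c cC cy) => _; apply: lt_le_trans.
case/negP: (no_broken_circuit CM yC ymin).
by apply/subsetP => x /setD1P [xy xC]; case/andP: (above x xC xy).
Qed.

(* The minimal level on C is attained twice: otherwise all of C but one element c0 lies in
   [cl_above j] for the minimal level j, hence c0 as well, contradicting its level. *)
Lemma level_circuit (C : {set S}) : C \in M -> forall c0, c0 \in C ->
  exists2 c, c \in C & (c != c0) && le_opt (level c) (level c0).
Proof.
move=> CM c0 c0C; case: hM => card_gt2 _ _.
have [/exists_inP [c cC h]|/exists_inPn above] :=
  boolP [exists c in C, (c != c0) && le_opt (level c) (level c0)]; first by exists c.
exfalso; pose q c := odflt c (level c).
have Hq c : c \in C :\ c0 -> level c = Some (q c) /\ ~~ le_opt (level c) (level c0).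
  case/setD1P => cc0 cC; move: (above c cC); rewrite cc0 /= /q.
  by case: (level c) => //= a ->.
have [E|[x0 x0C]] := set_0Vmem (C :\ c0).
  by move: (card_gt2 C CM); rewrite (cardsD1 c0) c0C E cards0.
case: (arg_minP q x0C) => c1 c1C c1min; have [e1 _] := Hq c1 c1C.
have sU : C :\ c0 \subset cl_above (q c1).
  apply/subsetP => c cC; have [ec _] := Hq c cC; have [_ cU _] := levelP ec.
  exact: (subsetP (cl_above_anti (c1min c cC)) c cU).
have c0U : c0 \in cl_above (q c1).
  by apply: (subsetP (cl_idem hM _)); apply: mem_cl_circuit CM c0C sU.
have [j1J _ _] := levelP e1; have [j e0 le0] := level_ge j1J c0U.
by have [_] := Hq c1 c1C; rewrite e1 e0 /= le0.
Qed.

Lemma subst_level_os_ideal (f : ext) : os_ideal M f -> subst level f = 0.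
Proof.
case=> n [a [g [b [gM ->]]]]; rewrite subst_sum big1 // => i _; rewrite !subst_emul.
have [C CM ->] := gM i.
by rewrite subst_os_gen ?emul0r ?emul0l //; apply: level_circuit.
Qed.

Lemma tgt_level_J j : j \in J -> tgt level j = j.
Proof. by move=> jJ; rewrite /tgt level_J. Qed.

Lemma subst_mon_level_J : subst_mon R level J = tmon J.
Proof.
have aJ : admissible level J.
  by apply: admissibleP => [j jJ|x y xJ yJ]; rewrite ?level_J ?tgt_level_J.
rewrite /subst_mon aJ /tgt_inversions /tgt_cross.
rewrite big1 => [|a aJ']; last first.
  by rewrite big1 // => b bJ; rewrite !tgt_level_J //; case: ltgtP.
rewrite (eq_in_imset (g := id)) ?imset_id ?scale1r // => x; exact: tgt_level_J.
Qed.

(* Since [level x <= x] with equality on J, no smaller monomial is mapped onto t_J. *)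
Lemma subst_mon_level_lt K : deglex_lt K J -> subst_mon R level K J = 0.
Proof.
move=> KJ; rewrite /subst_mon; case: ifP => aK; last by rewrite ffunE.
rewrite ffunE tmonE; have [EJ|_] := eqVneq J (tgt level @: K); last first.
  by rewrite mulr0n scaler0.
have iK := admissible_inj aK.
move: KJ; rewrite deglex_ltE EJ card_in_imset // ltnn eqxx -EJ /=.
case/exists_inP => x /setDP [xK xJ] /forall_inP xmin.
have tJ : tgt level x \in J by rewrite EJ imset_f.
have tx : tgt level x != x by apply: contraNneq xJ => <-.
have tK : tgt level x \notin K.
  by apply: contra tx => tK; apply/eqP/(iK _ _ tK xK); rewrite tgt_level_J.
have := xmin (tgt level x); rewrite !inE tJ (negbTE tK) /= => /(_ isT) xt.
by case/negP: tx; rewrite eq_le xt level_le // (admissible_some aK xK).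
Qed.

Lemma nbc_not_lead (f : ext) : os_ideal M f -> ~ is_lead f J.
Proof.
move=> If [fJ lead]; have := congr1 (fun z : ext => z J) (subst_level_os_ideal If).
rewrite /subst sum_ffunE ffunE (bigD1 J) //= big1 => [|K nK]; last first.
  rewrite ffunE; have [->|fK] := eqVneq (f K) 0; first by rewrite scale0r.
  case: (lead K fK) => [eK|lt]; first by rewrite eK eqxx in nK.
  by rewrite subst_mon_level_lt // scaler0.
have fJ1 : f J *: (true%:R : R^o) = f J by exact: mulr1.
by rewrite ffunE subst_mon_level_J tmonE eqxx fJ1 addr0 => fJ0; rewrite fJ0 eqxx in fJ.
Qed.

End NoBrokenCircuit.

Section OrlikSolomonIdeal.
Context {d : Order.disp_t} (S : finOrderType d) (R : comPzRingType).
Local Notation ext := {ffun {set S} -> R^o}.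
Local Notation tmon := (@tmon d S R).
Local Notation emul := (@emul d S R).

Lemma os_genE (K L : {set S}) :
  os_gen R K L = \sum_(j in K) (-1) ^+ #|[set i in K | (i < j)%O]| * (L == K :\ j)%:R.
Proof. by rewrite /os_gen sum_ffunE; apply: eq_bigr => j _; rewrite ffunE tmonE. Qed.

Lemma os_gen_lead (K : {set S}) : K != set0 -> (1 != 0 :> R) ->
  is_lead (os_gen R K) (drop_min K).
Proof.
move=> /set0Pn [x0 x0K] nt; case: (arg_minP id x0K) => m mK mmin.
rewrite (drop_min_setD1 mK mmin).
have setD1_inj j : j \in K -> (K :\ m == K :\ j) = (j == m).
  move=> jK; apply/eqP/eqP => [/setP/(_ j)|-> //].
  by rewrite !inE eqxx jK andbT /=; case: eqP.
split.
  rewrite os_genE (bigD1 m) //= big1 => [|j /andP [jK jm]]; last first.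
    by rewrite setD1_inj // (negbTE jm) mulr0.
  have -> : #|[set i in K | (i < m)%O]| = 0%N.
    apply/eqP; rewrite cards_eq0; apply/eqP/setP => i; rewrite !inE.
    by case iK: (i \in K); rewrite //= ltNge mmin.
  by rewrite eqxx mulr1 addr0 expr0.
move=> L; rewrite os_genE.
have [/exists_inP [j jK /eqP ->] _|/exists_inPn Lnot] := boolP [exists j in K, L == K :\ j].
  by have [->|jm] := eqVneq j m; [left | right; apply: deglex_setD1].
by rewrite big1 ?eqxx // => j jK; rewrite (negbTE (Lnot j jK)) mulr0.
Qed.

Lemma ext_trivial : (1 = 0 :> R) -> forall x : ext, x = 0.
Proof. by move=> R0 x; apply/ffunP => K; rewrite ffunE -[x K]mulr1 R0 mulr0. Qed.

Lemma tmon_divisible (D J : {set S}) : D \subset J ->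
  tmon J = emul ((-1) ^+ inv_count (J :\: D) D *: tmon (J :\: D)) (tmon D).
Proof.
move=> sDJ; rewrite emulZl emul_tmon /mono_mul.
have -> : [disjoint J :\: D & D] by rewrite disjoints_subset subDset setUCr subsetT.
have -> : (J :\: D) :|: D = J by rewrite setUC -{1}(setIidPr sDJ) setID.
by rewrite scalerA -exprD addnn -signr_odd odd_double scale1r.
Qed.

Lemma gen_ideal0 (P : ext -> Prop) : gen_ideal P 0.
Proof. by exists 0%N, (fun=> 0), (fun=> 0), (fun=> 0); split; [case | rewrite big_ord0]. Qed.

Lemma gen_ideal_mono (P Q : ext -> Prop) (x : ext) :
  (forall m, P m -> Q m) -> gen_ideal P x -> gen_ideal Q x.
Proof. by move=> PQ [n [a [g [b [Pg ->]]]]]; exists n, a, g, b; split => // i; apply: PQ. Qed.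

Lemma gen_ideal_trans (P Q : ext -> Prop) (x : ext) :
  (forall m, P m -> exists u g v, Q g /\ m = emul (emul u g) v) ->
  gen_ideal P x -> gen_ideal Q x.
Proof.
move=> PQ [n [a [m [b [Pm ->]]]]].
have /fin_all_exists [t Qt] : forall i : 'I_n, exists t : ext * ext * ext,
    Q t.1.2 /\ m i = emul (emul t.1.1 t.1.2) t.2.
  by move=> i; have [u [g [v [Qg e]]]] := PQ _ (Pm i); exists (u, g, v).
exists n, (fun i => emul (a i) (t i).1.1), (fun i => (t i).1.2), (fun i => emul (t i).2 (b i)).
split=> [i|]; first by case: (Qt i).
by apply: eq_bigr => i _; case: (Qt i) => _ ->; rewrite !emul_assoc.
Qed.

Lemma os_ideal_os_gen (M : {set {set S}}) (J : {set S}) : J \in M -> os_ideal M (os_gen R J).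
Proof.
move=> JM; exists 1%N, (fun=> tmon set0), (fun=> os_gen R J), (fun=> tmon set0).
by split=> [i|]; [exists J | rewrite big_ord1 emul1l emul1r].
Qed.

Variables (M Mbar : {set {set S}}).
Hypotheses (hM : is_circuit_system M) (hMbar : groebner_circuits_spec M Mbar).

Definition os_groebner_gens (g : ext) : Prop := exists2 J, J \in M :&: Mbar & g = os_gen R J.

Lemma lead_os_ideal_broken (f : ext) (J : {set S}) : os_ideal M f -> is_lead f J ->
  exists2 K, K \in M :&: Mbar & drop_min K \subset J.
Proof.
move=> If lead; have [/exists_inP [C CM sCJ]|/exists_inPn nbc] :=
  boolP [exists C in M, drop_min C \subset J]; last by case: (nbc_not_lead hM nbc If lead).
have dC : dependent M C by apply/exists_inP; exists C.
have [K KMMbar sK] := groebner_circuit_reduces hMbar dC.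
by exists K => //; apply: subset_trans sK sCJ.
Qed.

Lemma lead_os_ideal_reducible : (1 != 0 :> R) -> forall m,
  lead_monomials (os_ideal M) m ->
  exists u g v, lead_monomials os_groebner_gens g /\ m = emul (emul u g) v.
Proof.
move=> nt m [f [If [J [lead ->]]]]; have [K KMMbar sKJ] := lead_os_ideal_broken If lead.
have K0 : K != set0.
  case: hM => card_gt2 _ _; apply: contraTneq (card_gt2 K (setIP KMMbar).1) => ->.
  by rewrite cards0.
exists ((-1) ^+ inv_count (J :\: drop_min K) (drop_min K) *: tmon (J :\: drop_min K)).
exists (tmon (drop_min K)), (tmon set0); split; last by rewrite emul1r -tmon_divisible.
by exists (os_gen R K); split; [exists K | exists (drop_min K); split=> //; apply: os_gen_lead].
Qed.

End OrlikSolomonIdeal.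

Theorem corollary1p6 (d : Order.disp_t) (S : finOrderType d) (R : comPzRingType)
    (M Mbar : {set {set S}})
    (hM : is_circuit_system M) (hMbar : groebner_circuits_spec M Mbar) :
  groebner_basis (fun g : ext S R => exists2 J, J \in M :&: Mbar & g = os_gen R J)
                 (os_ideal (R:=R) M).
Proof.
have gens_in_ideal g : os_groebner_gens M Mbar g -> os_ideal M g.
  by case=> J /setIP [JM _] ->; apply: os_ideal_os_gen.
split=> [g /gens_in_ideal //|x]; split.
  apply: gen_ideal_mono => _ [f [Gf [J [lead ->]]]].
  by exists f; split; [apply: gens_in_ideal | exists J].
have [R0 _|nt] := eqVneq (1 : R) 0; first by rewrite (ext_trivial R0 x); apply: gen_ideal0.
exact/gen_ideal_trans/lead_os_ideal_reducible.
Qed.
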